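(* Let $n\ge4$, let $m=\lfloor n/2\rfloor$, and let $\pi=(m-1)^{m-1}(n-m)^{n-2m+2}(n-1)^{m-1}$ (exponents denote multiplicities). Then $\pi$ is graphical, $\pi\in\mathrm{BM}(\text{$1$-binding})$, but $\pi\notin\mathrm{BM}(\text{hamiltonian})$.
   Context: Graphs are finite and simple; a graphical sequence is a nondecreasing integer sequence that is the degree sequence of some graph (a realization). $\pi'\ge\pi$ means termwise $\ge$. A graphical sequence is forcibly $P$ if every realization has $P$; for increasing $P$, $\mathrm{BM}(P)$ is the set of graphical $\pi$ such that every graphical $\pi'\ge\pi$ of the same length is forcibly $P$. For $S\subseteq V(G)$ let $N(S)$ be the set of vertices adjacent to some vertex of $S$; with $\mathcal S=\{S\subseteq V(G): S\ne\emptyset,\ N(S)\ne V(G)\}$, the binding number is $\mathrm{bind}(G)=\min_{S\in\mathcal S}|N(S)|/|S|$ (and $\mathrm{bind}(K_n)=n-1$). $G$ is $b$-binding if $\mathrm{bind}(G)\ge b$. *)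

From HB Require Import structures.
From mathcomp Require Import all_boot all_order all_algebra.
Set Implicit Arguments. Unset Strict Implicit. Unset Printing Implicit Defensive.
Import Order.TTheory GRing.Theory Num.Theory.

Definition simple_graph (n : nat) (e : rel 'I_n) : Prop :=
  symmetric e /\ irreflexive e.

Definition deg (n : nat) (e : rel 'I_n) (x : 'I_n) : nat := #|[set y | e x y]|.

Definition degseq (n : nat) (e : rel 'I_n) : seq nat :=
  sort leq [seq deg e x | x <- enum 'I_n].

Definition realizes (n : nat) (e : rel 'I_n) (pi : seq nat) : Prop :=
  simple_graph e /\ degseq e = pi.

Definition graphical (n : nat) (pi : seq nat) : Prop :=
  exists e : rel 'I_n, realizes e pi.

Definition forcibly (n : nat) (P : rel 'I_n -> Prop) (pi : seq nat) : Prop :=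
  forall e : rel 'I_n, realizes e pi -> P e.

Definition seq_ge (pi' pi : seq nat) : bool := all2 leq pi pi'.

Definition BM (n : nat) (P : rel 'I_n -> Prop) (pi : seq nat) : Prop :=
  graphical n pi /\
  forall pi' : seq nat, graphical n pi' -> seq_ge pi' pi -> forcibly P pi'.

Definition nbhd (n : nat) (e : rel 'I_n) (S : {set 'I_n}) : {set 'I_n} :=
  [set y | [exists x in S, e x y]].

Definition bindfam (n : nat) (e : rel 'I_n) (S : {set 'I_n}) : bool :=
  (S != set0) && (nbhd e S != [set: 'I_n]).

(* binding number, a rational; n-1 when the family is empty (G = K_n) *)
Definition bind (n : nat) (e : rel 'I_n) : rat :=
  if [exists S, bindfam e S] then
    (\big[Num.min/(n.-1)%:R]_(S | bindfam e S) ((#|nbhd e S|)%:R / (#|S|)%:R))%R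
  else ((n.-1)%:R)%R.

Definition binding (b : rat) (n : nat) (e : rel 'I_n) : Prop := (b <= bind e)%R.

(* Hamiltonian: a cycle through all n vertices (n >= 3 in our use) *)
Definition hamiltonian (n : nat) (e : rel 'I_n) : Prop :=
  exists s : seq 'I_n, [/\ uniq s, size s = n & cycle e s].

Definition pi13 (n : nat) : seq nat :=
  let m := n./2 in
  nseq (m - 1) (m - 1) ++ nseq (n - 2 * m + 2) (n - m) ++ nseq (m - 1) (n - 1).

From mathcomp Require Import all_boot all_order all_algebra.
From mathcomp Require Import zify.
Import Order.TTheory GRing.Theory Num.Theory.
Set Implicit Arguments. Unset Strict Implicit.

(* The realization of [pi13 n] used below has three blocks: an independent set
   B of m-1 vertices, a clique C of n-2m+2 vertices, and a set A of m-1
   vertices adjacent to everything.  Deleting A leaves the m components of B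
   and C, one more than |A|, so this graph is not hamiltonian.

   For 1-binding, let the degrees of a graph dominate [pi13 n] and suppose
   |N(S)| < |S|.  Then the vertices of S have degree < |S|, and the at least
   n-|S|+1 vertices outside N(S) have degree at most n-|S|.  But for
   0 < j <= n-m fewer than j terms of [pi13 n] are below j, and one of |S|,
   n-|S|+1 is at most n-m. *)

Lemma card_set_count (T : finType) (P : pred T) :
  #|[set x | P x]| = count P (enum T).
Proof. by rewrite enumT cardsE cardE /enum_mem size_filter; apply: eq_count. Qed.

Lemma card_ord_ltn n k : k <= n -> #|[set i : 'I_n | i < k]| = k.
Proof.
move=> le_kn; rewrite card_set_count -(count_map val (fun i => i < k)).
by rewrite val_enum_ord -size_filter (filter_iota_ltn 0) ?size_iota.
Qed.

Lemma card_ord_geq n k : k <= n -> #|[set i : 'I_n | k <= i]| = n - k.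
Proof.
move=> le_kn; have := cardsC [set i : 'I_n | i < k].
rewrite card_ord card_ord_ltn //.
have -> : ~: [set i : 'I_n | i < k] = [set i : 'I_n | k <= i].
  by apply/setP => i; rewrite !inE -leqNgt.
lia.
Qed.

Definition few_below (k : nat) (d : seq nat) : Prop :=
  forall j, 0 < j <= k -> count (fun x => x < j) d < j.

Lemma count_ltn_all2_leq j (d d' : seq nat) : all2 leq d d' ->
  count (fun x => x < j) d' <= count (fun x => x < j) d.
Proof.
elim: d d' => [|x d IHd] [|y d'] //= /andP[le_xy le_dd'].
apply: leq_add; last exact: IHd.
by case: (ltnP y j) => //= lt_yj; rewrite (leq_ltn_trans le_xy lt_yj).
Qed.

Lemma few_below_all2_leq k (d d' : seq nat) :
  all2 leq d d' -> few_below k d -> few_below k d'.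
Proof.
move=> le_dd' few j j_range.
exact: leq_ltn_trans (count_ltn_all2_leq j le_dd') (few j j_range).
Qed.

Section Binding.

Variables (n : nat) (e : rel 'I_n).

Lemma count_degseq j :
  count (fun x => x < j) (degseq e) = #|[set x | deg e x < j]|.
Proof. by rewrite /degseq count_sort count_map card_set_count. Qed.

Lemma deg_le_card_nbhd (S : {set 'I_n}) x : x \in S -> deg e x <= #|nbhd e S|.
Proof.
move=> xS; apply: subset_leq_card; apply/subsetP => y; rewrite !inE => exy.
by apply/existsP; exists x; rewrite xS.
Qed.

Lemma deg_notin_nbhd (S : {set 'I_n}) x : symmetric e ->
  x \notin nbhd e S -> deg e x <= n - #|S|.
Proof.
move=> sym_e xN; have := cardsC S; rewrite card_ord => card_S.
apply: (@leq_trans #|~: S|); last lia.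
apply: subset_leq_card; apply/subsetP => y; rewrite !inE => exy.
apply: contra xN => yS; rewrite inE; apply/existsP; exists y.
by rewrite yS sym_e.
Qed.

(* The two sets of small-degree vertices are S and the complement of N(S). *)
Lemma deficient_small_degrees (S : {set 'I_n}) : symmetric e ->
  #|nbhd e S| < #|S| ->
  #|S| <= #|[set x | deg e x < #|S|]| /\
  (n - #|S|).+1 <= #|[set x | deg e x < (n - #|S|).+1]|.
Proof.
move=> sym_e lt_NS; split.
  apply: subset_leq_card; apply/subsetP => x xS; rewrite inE.
  exact: leq_ltn_trans (deg_le_card_nbhd xS) lt_NS.
have := cardsC (nbhd e S); rewrite card_ord => card_N.
apply: (@leq_trans #|~: nbhd e S|).
  by have := max_card S; rewrite card_ord; lia.
apply: subset_leq_card; apply/subsetP => x; rewrite in_setC => xN.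
by rewrite inE; apply: deg_notin_nbhd.
Qed.

Lemma expanding_of_few_below k : simple_graph e -> n <= k + k ->
  few_below k (degseq e) ->
  forall S : {set 'I_n}, S != set0 -> #|S| <= #|nbhd e S|.
Proof.
move=> [sym_e _] le_nk few S S0; rewrite leqNgt; apply/negP => lt_NS.
have S_gt0 : 0 < #|S| by rewrite card_gt0.
have := max_card S; rewrite card_ord => le_Sn.
have [small_S small_NS] := deficient_small_degrees sym_e lt_NS.
have few_j j : 0 < j <= k -> #|[set x | deg e x < j]| < j.
  by move=> j_range; rewrite -count_degseq; apply: few.
case: (leqP #|S| k) => [le_Sk | lt_kS].
  by have := few_j #|S|; lia.
by have := few_j (n - #|S|).+1; lia.
Qed.

Lemma binding1_of_expanding : 1 < n ->
  (forall S : {set 'I_n}, S != set0 -> #|S| <= #|nbhd e S|) -> binding 1 e.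
Proof.
move=> lt1n expand; rewrite /binding /bind.
have le1n : (1 <= (n.-1)%:R :> rat)%R by rewrite ler1n; lia.
case: ifP => _ //; apply: (big_ind (fun x : rat => 1 <= x)%R) => //.
  by move=> x y le1x le1y; rewrite le_min le1x le1y.
move=> S /andP[S0 _].
by rewrite ler_pdivlMr ?ltr0n ?card_gt0 // mul1r ler_nat expand.
Qed.

End Binding.

(* The relation [x \in C ==> y \in C] is transitive, so a cycle along which it
   holds relates any two of its points. *)
Lemma exists_next_notin (T : eqType) (s : seq T) (C : pred T) x y :
  uniq s -> x \in s -> y \in s -> x \in C -> y \notin C ->
  exists2 z, z \in C & next s z \notin C.
Proof.
move=> uniq_s xs ys xC yC.
have [/hasP[z _ /andP[zC fzC]] | /hasPn stay] :=
  boolP (has (fun z => (z \in C) && (next s z \notin C)) s).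
  by exists z.
pose R := [rel u v | (u \in C) ==> (v \in C)].
have R_trans : transitive R.
  by move=> v u w /implyP uv /implyP vw; apply/implyP => /uv.
have : cycle R s.
  apply: cycle_from_next => // z zs; apply/implyP => zC.
  by have := stay z zs; rewrite zC /= negbK.
rewrite cycle_all2rel // => /allrelP/(_ x y xs ys).
by rewrite /= xC (negbTE yC).
Qed.

(* The successor map of the cycle injects B into A, and also a vertex z of C
   whose successor leaves C. *)
Lemma hamiltonian_card_lt n (e : rel 'I_n) (A B C : {set 'I_n}) c y :
  hamiltonian e -> nbhd e B \subset A -> nbhd e C \subset A :|: C ->
  [disjoint B & C] -> c \in C -> y \notin C -> #|B| < #|A|.
Proof.
move=> [s [uniq_s size_s cycle_s]] NB NC BC cC yC.
have all_s x : x \in s.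
  have /subset_cardP : #|s| = #|'I_n| by rewrite card_ord (card_uniqP uniq_s).
  by move=> /(_ (subset_predT _)) /(_ x).
pose f := next s.
have e_f x : e x (f x) := next_cycle cycle_s (all_s x).
have f_inj : injective f := can_inj (prev_next uniq_s).
have f_nbhd (X : {set 'I_n}) x : x \in X -> f x \in nbhd e X.
  by move=> xX; rewrite inE; apply/existsP; exists x; rewrite xX e_f.
have [z zC fzC] := exists_next_notin uniq_s (all_s c) (all_s y) cC yC.
have fzA : f z \in A.
  by have := subsetP NC _ (f_nbhd C z zC); rewrite inE (negbTE fzC) orbF.
have zB : z \notin B by rewrite (disjointFl BC zC).
have : f @: (z |: B) \subset A.
  apply/subsetP => _ /imsetP[x /setU1P[-> | xB] ->] //.
  exact: subsetP NB _ (f_nbhd B x xB).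
by move/subset_leq_card; rewrite card_imset // cardsU1 zB.
Qed.

Lemma map_iota_const (f : nat -> nat) c a b :
  (forall i, a <= i < a + b -> f i = c) -> map f (iota a b) = nseq b c.
Proof.
move=> f_c; rewrite -[in RHS](size_iota a b) -(size_map f); apply/all_pred1P.
by apply/allP => _ /mapP[i /[!mem_iota] /f_c fi ->]; rewrite /= fi.
Qed.

Section Construction.

Variable n : nat.
Hypothesis n_ge4 : 4 <= n.

Let m := n./2.

Lemma half_bounds : 2 <= m /\ m + m <= n <= m + m + 1.
Proof. rewrite /m; lia. Qed.

(* The blocks B, C and A of the construction are the index intervals
   [0, m-1), [m-1, n-m] and (n-m, n). *)
Definition low (i : nat) : bool := i < m - 1.
Definition high (i : nat) : bool := n - m < i.

Definition pi13_graph : rel 'I_n :=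
  fun x y => (x != y) && [|| high x, high y | ~~ low x && ~~ low y].

Definition pi13_deg (i : nat) : nat :=
  if low i then m - 1 else if high i then n - 1 else n - m.

Lemma pi13_graph_simple : simple_graph pi13_graph.
Proof.
split=> [x y | x]; last by rewrite /pi13_graph eqxx.
by rewrite /pi13_graph eq_sym orbCA [~~ low x && _]andbC.
Qed.

Lemma deg_pi13_graph (x : 'I_n) : deg pi13_graph x = pi13_deg x.
Proof.
have [m_ge2 /andP[le2mn len2m]] := half_bounds.
rewrite /deg /pi13_deg; case: ifP => [xlow | xlow]; last case: ifP => [xhigh | xhigh].
- have -> : [set y | pi13_graph x y] = [set y : 'I_n | (n - m).+1 <= y].
    apply/setP => y; rewrite !inE /pi13_graph /high -val_eqE /=.
    by move: xlow; rewrite /low; lia.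
  by rewrite card_ord_geq; lia.
- have -> : [set y | pi13_graph x y] = [set~ x].
    by apply/setP => y; rewrite !inE /pi13_graph xhigh andbT eq_sym.
  by rewrite cardsC1 card_ord; lia.
- have -> : [set y | pi13_graph x y] = [set y : 'I_n | m - 1 <= y] :\ x.
    apply/setP => y; rewrite !inE /pi13_graph xlow xhigh eq_sym /=.
    by congr (_ && _); rewrite /low /high; lia.
  have := cardsD1 x [set y : 'I_n | m - 1 <= y].
  by rewrite card_ord_geq ?inE; move: xlow; rewrite /low; lia.
Qed.

Lemma pi13_deg_homo : {homo pi13_deg : i j / i <= j}.
Proof.
move=> i j le_ij; rewrite /pi13_deg /low /high.
by repeat case: ifP; lia.
Qed.

Lemma map_pi13_deg : map pi13_deg (iota 0 n) = pi13 n.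
Proof.
have [m_ge2 /andP[le2mn len2m]] := half_bounds.
have split_n : n = (m - 1) + ((n - 2 * m + 2) + (m - 1)) by lia.
rewrite {1}split_n (iotaD 0 (m - 1)) (iotaD _ (n - 2 * m + 2)) !map_cat /pi13 -/m.
congr (_ ++ (_ ++ _)); apply: map_iota_const => i i_range;
  rewrite /pi13_deg /low /high; by repeat case: ifP; lia.
Qed.

Lemma degseq_pi13_graph : degseq pi13_graph = pi13 n.
Proof.
rewrite /degseq.
have -> : [seq deg pi13_graph x | x <- enum 'I_n] = map pi13_deg (iota 0 n).
  by rewrite -val_enum_ord -map_comp; apply: eq_map => x; apply: deg_pi13_graph.
rewrite map_pi13_deg sort_le_id // -map_pi13_deg.
exact: homo_sorted pi13_deg_homo _ (iota_sorted 0 n).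
Qed.

Lemma few_below_pi13 : few_below (n - m) (pi13 n).
Proof.
have [m_ge2 /andP[le2mn len2m]] := half_bounds.
by move=> j /andP[j_gt0 le_j]; rewrite /pi13 -/m !count_cat !count_nseq; lia.
Qed.

Lemma pi13_graph_not_hamiltonian : ~ hamiltonian pi13_graph.
Proof.
have [m_ge2 /andP[le2mn len2m]] := half_bounds.
pose A := [set x : 'I_n | high x].
pose B := [set x : 'I_n | low x].
pose C := [set x : 'I_n | ~~ low x && ~~ high x].
have lt_c : m - 1 < n by lia.
have lt_y : n - 1 < n by lia.
have NB : nbhd pi13_graph B \subset A.
  apply/subsetP => y /[!inE] /existsP[x /andP[]].
  by rewrite !inE /pi13_graph /low /high; lia.
have NC : nbhd pi13_graph C \subset A :|: C.
  apply/subsetP => y /[!inE] /existsP[x /andP[]].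
  by rewrite !inE /pi13_graph /low /high; lia.
have BC : [disjoint B & C].
  by rewrite disjoint_subset; apply/subsetP => x; rewrite !inE => ->.
have cC : Ordinal lt_c \in C by rewrite inE /low /high /=; lia.
have yC : Ordinal lt_y \notin C by rewrite inE /low /high /=; lia.
move=> /hamiltonian_card_lt /(_ NB NC BC cC yC).
by rewrite card_ord_ltn ?card_ord_geq; lia.
Qed.

End Construction.

Theorem mainTheorem13 (n : nat) (hn : 4 <= n) :
  [/\ graphical n (pi13 n),
      BM (@binding 1%R n) (pi13 n)
    & ~ BM (@hamiltonian n) (pi13 n)].
Proof.
have realizes_pi13 : realizes (@pi13_graph n) (pi13 n).
  by split; [apply: pi13_graph_simple | apply: degseq_pi13_graph].
have graphical_pi13 : graphical n (pi13 n) by exists (@pi13_graph n).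
split=> //.
- split=> // pi' _ le_pi' e [simple_e deg_e]; rewrite -deg_e in le_pi'.
  apply: binding1_of_expanding; first lia.
  apply: (expanding_of_few_below (k := n - n./2)) => //; first lia.
  exact: few_below_all2_leq le_pi' (few_below_pi13 hn).
- have le_pi13 : seq_ge (pi13 n) (pi13 n).
    by rewrite /seq_ge; elim: (pi13 n) => //= d s ->; rewrite leqnn.
  move=> [_ /(_ _ graphical_pi13 le_pi13 _ realizes_pi13)].
  exact: pi13_graph_not_hamiltonian.
Qed.
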